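(* (Discrete Korn inequality for space groups.) Suppose that $\mathcal G$ is a space group and $\mathcal R\subset\mathcal G$ has Property 2. Then the seminorms $\|\cdot\|_{\mathcal R}$, $\|\cdot\|_{\mathcal R,0,0}$ and $u\mapsto\|\nabla_{\mathcal R}u\|_2$ on $U_{\mathrm{per}}$ are equivalent.
   Context: Euclidean group: $\mathrm E(n)$ consists of pairs $(A|b)$, $A\in\mathrm O(n)$, $b\in\mathbb R^n$, acting by $(A|b)\cdot x=Ax+b$, product $(A_1|b_1)(A_2|b_2)=(A_1A_2|b_1+A_1b_2)$; $\mathrm{rot}(A|b)=A$. A space group in $\mathrm E(n)$ is a discrete subgroup containing $n$ translations $(I|b)$ with linearly independent $b$'s. Standing setting: $d=d_1+d_2$; $\mathcal S<\mathrm E(d_2)$ is a space group with translation subgroup $\mathcal T_{\mathcal S}$; $A\oplus(B|b)=(\mathrm{diag}(A,B)|(0,b))$; $\mathcal G$ is a discrete subgroup of $\mathrm E(d)$ contained in $\{A\oplus s:A\in\mathrm O(d_1),s\in\mathcal S\}$ projecting onto $\mathcal S$; $\mathcal T\subset\mathcal G$ maps bijectively onto $\mathcal T_{\mathcal S}$. There is $m_0\in\mathbb N$ such that $\mathcal T^N=\{t^N:t\in\mathcal T\}$ is a normal subgroup iff $N\in\mathcal M=m_0\mathbb N$, then isomorphic to $\mathbb Z^{d_2}$ of finite index; $\mathcal C_N$ is a fixed set of representatives of $\mathcal G/\mathcal T^N$. $U_{\mathrm{per}}$: maps $u:\mathcal G\to\mathbb R^d$ that are $\mathcal T^N$-periodic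 for some $N\in\mathcal M$. $x_0\in\mathbb R^d$ with $g\mapsto g\cdot x_0$ injective; $d_{\mathrm{aff}}=\dim\mathrm{aff}(\mathcal G\cdot x_0)$; assumed $\mathcal G\cdot x_0\subset\{0_{d-d_{\mathrm{aff}}}\}\times\mathbb R^{d_{\mathrm{aff}}}$ and $\mathcal G$ acts trivially on $\mathbb R^{d-d_{\mathrm{aff}}}\times\{0\}$. For $\mathcal R\subset\mathcal G$, maps $v:\mathcal R\to\mathbb R^d$: $U_{\mathrm{iso}}(\mathcal R)$: $\exists a\in\mathbb R^d$, $S\in\mathrm{Skew}(d)$ with $\mathrm{rot}(g)v(g)=a+S(g\cdot x_0-x_0)$ on $\mathcal R$; $U_{\mathrm{iso},0,0}(\mathcal R)$: the same with $S=S_1\oplus0_{d_2\times d_2}$, $S_1\in\mathrm{Skew}(d_1)$. For finite $\mathcal R$ and $\mathcal T^N$-periodic $u$: $\|u\|_{\mathcal R}$ (resp. $\|u\|_{\mathcal R,0,0}$) $=\big(\frac1{|\mathcal C_N|}\sum_{g\in\mathcal C_N}\mathrm{dist}(u(g\,\cdot)|_{\mathcal R},U)^2\big)^{1/2}$ with $U=U_{\mathrm{iso}}(\mathcal R)$ (resp. $U_{\mathrm{iso},0,0}(\mathcal R)$); $\|\nabla_{\mathcal R}u\|_2=\big(\frac1{|\mathcal C_N|}\sum_{g\in\mathcal C_N}\sum_{h\in\mathcal R}|u(gh)-\mathrm{rot}(h)^Tu(g)|^2\big)^{1/2}$. Property 1: $\mathcal R$ finite, $\mathrm{id}\in\mathcal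 R$, $\mathrm{aff}(\mathcal R\cdot x_0)=\mathrm{aff}(\mathcal G\cdot x_0)$. Property 2: $\mathcal R$ finite, and there are $\mathcal R',\mathcal R''$ with $\mathrm{id}\in\mathcal R'$, $\mathcal R'$ generating $\mathcal G$, $\mathcal R''$ with Property 1, and $\{gh:g\in\mathcal R',h\in\mathcal R''\}\subset\mathcal R$. *)

From HB Require Import structures.
From mathcomp Require Import all_boot all_order all_algebra.
From mathcomp Require Import boolp classical_sets reals.
Set Implicit Arguments. Unset Strict Implicit. Unset Printing Implicit Defensive.
Import Order.TTheory GRing.Theory Num.Theory.
Local Open Scope ring_scope.
Local Open Scope classical_set_scope.

Section Euclid.
Variables (R : realType) (d : nat).

(* E(d): pairs (A|b); orthogonality of A is imposed by [is_subgroup]. *)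
Definition Eu := ('M[R]_d * 'cV[R]_d)%type.
Definition rot (g : Eu) : 'M[R]_d := g.1.
Definition transl_part (g : Eu) : 'cV[R]_d := g.2.
Definition emul (g h : Eu) : Eu := (g.1 *m h.1, g.2 + g.1 *m h.2).
Definition eid : Eu := (1%:M, 0).
(* inverse of (A|b) for orthogonal A *)
Definition einv (g : Eu) : Eu := (g.1^T, - (g.1^T *m g.2)).
Definition eact (g : Eu) (x : 'cV[R]_d) : 'cV[R]_d := g.1 *m x + g.2.
Definition epow (g : Eu) (n : nat) : Eu := iter n (emul g) eid.

Definition orthogonal_mx (A : 'M[R]_d) := A^T *m A = 1%:M.

Definition is_subgroup (H : set Eu) :=
  [/\ (forall g, H g -> orthogonal_mx (rot g)), H eid,
      (forall g h, H g -> H h -> H (emul g h)) &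
      (forall g, H g -> H (einv g))].

Definition is_discrete (H : set Eu) :=
  exists eps : R, 0 < eps /\
    forall g, H g ->
      (forall i j, `|rot g i j - (1%:M : 'M[R]_d) i j| < eps) ->
      (forall i, `|transl_part g i ord0| < eps) -> g = eid.

(* space group: discrete subgroup containing d translations (I|b_i)
   with linearly independent b_i (the columns of an invertible B) *)
Definition space_group (G : set Eu) :=
  [/\ is_subgroup G, is_discrete G &
      exists B : 'M[R]_d, B \in unitmx /\ forall i, G (1%:M, col i B)].

Definition transl_sub (G : set Eu) : set Eu := [set g | G g /\ rot g = 1%:M].

Definition powset (T : set Eu) (N : nat) : set Eu :=
  [set g | exists t, T t /\ g = epow t N].

Definition normal_sub (H G : set Eu) :=
  [/\ is_subgroup H, H `<=` G &
      forall g h, G g -> H h -> H (emul (emul g h) (einv g))].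

Definition is_reps (G H : set Eu) (C : seq Eu) :=
  [/\ uniq C, (forall c, c \in C -> G c),
      (forall g, G g -> exists2 c, c \in C & H (emul (einv c) g)) &
      (forall c c', c \in C -> c' \in C -> H (emul (einv c) c') -> c = c')].

Definition periodic (G H : set Eu) (u : Eu -> 'cV[R]_d) :=
  forall g t, G g -> H t -> u (emul g t) = u g.

Definition sqnorm (x : 'cV[R]_d) : R := \sum_i x i ord0 ^+ 2.

Definition Uiso (x0 : 'cV[R]_d) (Rs : seq Eu) (v : Eu -> 'cV[R]_d) :=
  exists (a : 'cV[R]_d) (S : 'M[R]_d), S^T = - S /\
    forall g, g \in Rs -> rot g *m v g = a + S *m (eact g x0 - x0).

(* U_iso,0,0(Rs) for the splitting d = d1 + (d - d1): S = S1 (+) 0 *)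
Definition Uiso00 (d1 : nat) (x0 : 'cV[R]_d) (Rs : seq Eu) (v : Eu -> 'cV[R]_d) :=
  exists (a : 'cV[R]_d) (S : 'M[R]_d), [/\ S^T = - S,
    (forall i j : 'I_d, ~~ ((i < d1)%N && (j < d1)%N) -> S i j = 0) &
    forall g, g \in Rs -> rot g *m v g = a + S *m (eact g x0 - x0)].

(* Euclidean distance of v|_Rs to U (U only depends on values on Rs) *)
Definition distU (U : (Eu -> 'cV[R]_d) -> Prop) (Rs : seq Eu) (v : Eu -> 'cV[R]_d) : R :=
  inf [set r : R | exists w, U w /\
         r = Num.sqrt (\sum_(h <- Rs) sqnorm (v h - w h))].

(* ||u||_Rs w.r.t. U, computed with representatives C of G/T^N *)
Definition normU (U : (Eu -> 'cV[R]_d) -> Prop) (C Rs : seq Eu) (u : Eu -> 'cV[R]_d) : R :=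
  Num.sqrt ((size C)%:R^-1 *
    \sum_(g <- C) (distU U Rs (fun h => u (emul g h))) ^+ 2).

Definition gradnorm (C Rs : seq Eu) (u : Eu -> 'cV[R]_d) : R :=
  Num.sqrt ((size C)%:R^-1 *
    \sum_(g <- C) \sum_(h <- Rs) sqnorm (u (emul g h) - (rot h)^T *m u g)).

Definition aff (P : set 'cV[R]_d) : set 'cV[R]_d :=
  [set x | exists s : seq ('cV[R]_d * R),
     [/\ forall p, p \in s -> P p.1,
         \sum_(p <- s) p.2 = 1 &
         x = \sum_(p <- s) p.2 *: p.1]].

Definition property1 (G : set Eu) (x0 : 'cV[R]_d) (Rs : seq Eu) :=
  [/\ uniq Rs, (forall h, h \in Rs -> G h), eid \in Rs &
      aff [set eact h x0 | h in [set h | h \in Rs]] = aff [set eact g x0 | g in G]].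

Definition generates (G R' : set Eu) :=
  R' `<=` G /\ forall H, is_subgroup H -> R' `<=` H -> G `<=` H.

Definition property2 (G : set Eu) (x0 : 'cV[R]_d) (Rs : seq Eu) :=
  [/\ uniq Rs, (forall h, h \in Rs -> G h) &
      exists (R' : set Eu) (R'' : seq Eu),
        [/\ R' eid, generates G R', property1 G x0 R'' &
            forall g h, R' g -> h \in R'' -> emul g h \in Rs]].

End Euclid.

(* Fit, on every patch [g Rs], the best infinitesimal rigid motion
   [y |-> a_g + S_g (y - x0)] (with [S_g] skew) to [u].  The comparisons
   between [||u||_Rs,0,0] and [||grad_Rs u||_2] are pointwise in [g].  The
   substance is to drop the rotational parts [S_g].  Since [R'' x0] affinely
   spans, two fits valid on a common patch [g r R''] have close skew parts, so
   along words in the generators (Property 2) the defect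
   [u (c t) - u c - S_c b] of a lattice translation [t = (I | b)] is bounded by
   local fitting errors near [c].  A discrete Korn inequality on the translation
   lattice then bounds [sum_c |S_c|^2] by these defects: by periodicity,
   summation by parts turns [sum_c d_j u_i d_i u_j] into
   [sum_c (sum_i d_i u_i)^2 >= 0], which controls the skew part of the discrete
   gradient by its symmetric part. *)

From Pilot Require Import Defs.
From HB Require Import structures.
From mathcomp Require Import all_boot all_order all_algebra.
From mathcomp Require Import boolp classical_sets reals.
From mathcomp Require Import ring lra.
Set Implicit Arguments. Unset Strict Implicit. Unset Printing Implicit Defensive.
Import Order.TTheory GRing.Theory Num.Theory.
Local Open Scope ring_scope.
Local Open Scope classical_set_scope.
Local Notation rot := Defs.rot.

Section EuclideanGroup.
Variables (R : realType) (d : nat).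
Local Notation Eu := (Eu R d).
Local Notation eid := (eid R d).
Implicit Types (g h k : Eu) (A : 'M[R]_d) (x y : 'cV[R]_d).

Lemma emulA g h k : emul (emul g h) k = emul g (emul h k).
Proof.
case: g h k => [A a] [B b] [C c]; rewrite /emul /=.
by rewrite mulmxA mulmxDr addrA mulmxA.
Qed.

Lemma emul1g g : emul eid g = g.
Proof. by case: g => A a; rewrite /emul /eid /= !mul1mx add0r. Qed.

Lemma emulg1 g : emul g eid = g.
Proof. by case: g => A a; rewrite /emul /eid /= mulmx1 mulmx0 addr0. Qed.

Lemma rot_emul g h : rot (emul g h) = rot g *m rot h.
Proof. by []. Qed.

Lemma orthogonal_mxC A : orthogonal_mx A -> A *m A^T = 1%:M.
Proof. exact: mulmx1C. Qed.

Lemma orthogonal_trmx A : orthogonal_mx A -> orthogonal_mx A^T.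
Proof. by rewrite /orthogonal_mx trmxK; apply: orthogonal_mxC. Qed.

Lemma emulVg g : orthogonal_mx (rot g) -> emul (einv g) g = eid.
Proof.
by case: g => A a; rewrite /orthogonal_mx /emul /einv /eid /= => ->; rewrite addrC subrr.
Qed.

Lemma emulgV g : orthogonal_mx (rot g) -> emul g (einv g) = eid.
Proof.
case: g => A a; rewrite /orthogonal_mx /emul /einv /eid /= => oA.
by rewrite orthogonal_mxC // mulmxN mulmxA orthogonal_mxC // mul1mx subrr.
Qed.

Lemma emulKV g k : orthogonal_mx (rot g) -> emul g (emul (einv g) k) = k.
Proof. by move=> o; rewrite -emulA emulgV // emul1g. Qed.

Lemma einvM g h : orthogonal_mx (rot g) -> einv (emul g h) = emul (einv h) (einv g).
Proof.
case: g h => [A a] [B b]; rewrite /orthogonal_mx /emul /einv /= => oA.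
rewrite trmx_mul mulmxDr opprD addrC mulmxN mulmxA; congr (pair _ (_ + _)).
  by rewrite -(mulmxA B^T) oA mulmx1.
by rewrite mulmxA.
Qed.

Lemma einvK g : orthogonal_mx (rot g) -> einv (einv g) = g.
Proof.
case: g => A a; rewrite /orthogonal_mx /einv /= => oA.
by rewrite trmxK mulmxN opprK mulmxA orthogonal_mxC // mul1mx.
Qed.

Lemma einv1 : einv eid = eid.
Proof. by rewrite /einv /eid /= trmx1 mul1mx oppr0. Qed.

Lemma eactM g h x : eact (emul g h) x = eact g (eact h x).
Proof.
case: g h => [A a] [B b]; rewrite /eact /emul /=.
by rewrite mulmxDr mulmxA -addrA (addrC a).
Qed.

Lemma eactB g x y : eact g x - eact g y = rot g *m (x - y).
Proof. by rewrite /eact mulmxBr opprD addrACA subrr addr0. Qed.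

Lemma eact1 x : eact eid x = x.
Proof. by rewrite /eact /eid /= mul1mx addr0. Qed.

End EuclideanGroup.

Section SquaredNorms.
Variable R : realType.

Definition frob m n (M : 'M[R]_(m, n)) : R := \sum_i \sum_j M i j ^+ 2.

Lemma sum_sqr_ge0 (I : Type) (s : seq I) (a : I -> R) : 0 <= \sum_(i <- s) a i ^+ 2.
Proof. by apply: sumr_ge0 => i _; apply: sqr_ge0. Qed.

Lemma sumr_const_seq (I : Type) (s : seq I) (c : R) : \sum_(i <- s) c = (size s)%:R * c.
Proof. by rewrite -sum1_size natr_sum mulr_suml; under [RHS]eq_bigr do rewrite mul1r. Qed.

Lemma le_sum_mem (I : eqType) (s : seq I) (F : I -> R) x :
  (forall y, y \in s -> 0 <= F y) -> x \in s -> F x <= \sum_(y <- s) F y.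
Proof.
move=> F0 xs; rewrite (big_rem x xs) /= lerDl big_seq.
by apply: sumr_ge0 => y /mem_rem; apply: F0.
Qed.

Lemma cauchy_schwarz (I : Type) (s : seq I) (a b : I -> R) :
  (\sum_(i <- s) a i * b i) ^+ 2 <=
  (\sum_(i <- s) a i ^+ 2) * (\sum_(i <- s) b i ^+ 2).
Proof.
set A := \sum_(i <- s) a i ^+ 2; set B := \sum_(i <- s) b i ^+ 2.
set P := \sum_(i <- s) a i * b i.
have lagrange : \sum_(i <- s) \sum_(j <- s) (a i * b j - a j * b i) ^+ 2 =
                2 * (A * B - P ^+ 2).
  have pt i j : (a i * b j - a j * b i) ^+ 2 =
     (a i ^+ 2 * b j ^+ 2 + b i ^+ 2 * a j ^+ 2) - 2 * ((a i * b i) * (a j * b j)).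
    by ring.
  under eq_bigr => i _ do under eq_bigr => j _ do rewrite pt.
  under eq_bigr => i _ do rewrite sumrB big_split /= -!mulr_sumr.
  rewrite sumrB big_split /= -!mulr_suml -mulr_sumr -mulr_suml -/A -/B -/P.
  ring.
have : 0 <= 2 * (A * B - P ^+ 2).
  by rewrite -lagrange; apply: sumr_ge0 => i _; apply: sum_sqr_ge0.
by rewrite pmulr_rge0 // subr_ge0.
Qed.

Lemma sqnorm_ge0 n (x : 'cV[R]_n) : 0 <= sqnorm x.
Proof. exact: sum_sqr_ge0. Qed.

Lemma frob_ge0 m n (M : 'M[R]_(m, n)) : 0 <= frob M.
Proof. by apply: sumr_ge0 => i _; apply: sum_sqr_ge0. Qed.

Lemma sqnorm0 n : sqnorm (0 : 'cV[R]_n) = 0.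
Proof. by rewrite /sqnorm big1 // => i _; rewrite mxE expr0n. Qed.

Lemma frob0 m n : frob (0 : 'M[R]_(m, n)) = 0.
Proof. by rewrite /frob big1 // => i _; rewrite big1 // => j _; rewrite mxE expr0n. Qed.

Lemma sqnormN n (x : 'cV[R]_n) : sqnorm (- x) = sqnorm x.
Proof. by apply: eq_bigr => i _; rewrite mxE sqrrN. Qed.

Lemma sqnormBC n (x y : 'cV[R]_n) : sqnorm (x - y) = sqnorm (y - x).
Proof. by rewrite -sqnormN opprB. Qed.

Lemma frobN m n (M : 'M[R]_(m, n)) : frob (- M) = frob M.
Proof. by apply: eq_bigr => i _; apply: eq_bigr => j _; rewrite mxE sqrrN. Qed.

Lemma sqnormD_le n (x y : 'cV[R]_n) : sqnorm (x + y) <= 2 * sqnorm x + 2 * sqnorm y.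
Proof.
rewrite /sqnorm !mulr_sumr -big_split /=; apply: ler_sum => i _.
rewrite mxE -subr_ge0; set p := x i ord0; set q := y i ord0.
have -> : 2 * p ^+ 2 + 2 * q ^+ 2 - (p + q) ^+ 2 = (p - q) ^+ 2 by ring.
exact: sqr_ge0.
Qed.

Lemma sqnormB_le n (x y : 'cV[R]_n) (p q : R) :
  sqnorm x <= p -> sqnorm y <= q -> sqnorm (x - y) <= 2 * p + 2 * q.
Proof.
move=> hx hy; apply: le_trans (sqnormD_le _ _) _; rewrite sqnormN.
by apply: lerD; apply: ler_wpM2l.
Qed.

Lemma frob_col m n (M : 'M[R]_(m, n)) : frob M = \sum_j sqnorm (col j M).
Proof.
rewrite /frob exchange_big; apply: eq_bigr => j _; apply: eq_bigr => i _.
by rewrite mxE.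
Qed.

Lemma frobD_le m n (M N : 'M[R]_(m, n)) : frob (M + N) <= 2 * frob M + 2 * frob N.
Proof.
rewrite !frob_col !mulr_sumr -big_split /=; apply: ler_sum => j _.
by rewrite linearD; apply: sqnormD_le.
Qed.

Lemma frob_tr m n (M : 'M[R]_(m, n)) : frob M^T = frob M.
Proof.
by rewrite /frob exchange_big; apply: eq_bigr => i _; apply: eq_bigr => j _; rewrite mxE.
Qed.

Lemma sqnorm_mulmx_le m n (M : 'M[R]_(m, n)) (v : 'cV[R]_n) :
  sqnorm (M *m v) <= frob M * sqnorm v.
Proof.
rewrite /sqnorm /frob mulr_suml; apply: ler_sum => i _.
by rewrite mxE; apply: cauchy_schwarz.
Qed.

Lemma sqnorm_mulmx_frob_le m n (M : 'M[R]_(m, n)) (v : 'cV[R]_n) (p : R) :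
  frob M <= p -> sqnorm (M *m v) <= p * sqnorm v.
Proof.
move=> hM; apply: le_trans (sqnorm_mulmx_le _ _) _.
by apply: ler_wpM2r => //; apply: sqnorm_ge0.
Qed.

Lemma frob_mulmx_le m n p (M : 'M[R]_(m, n)) (N : 'M[R]_(n, p)) :
  frob (M *m N) <= frob M * frob N.
Proof.
rewrite frob_col [frob N]frob_col mulr_sumr; apply: ler_sum => k _.
by rewrite !colE -mulmxA; apply: sqnorm_mulmx_le.
Qed.

Lemma sqnorm_orthogonal n (Q : 'M[R]_n) (x : 'cV[R]_n) :
  orthogonal_mx Q -> sqnorm (Q *m x) = sqnorm x.
Proof.
have sqnormE (y : 'cV[R]_n) : sqnorm y = (y^T *m y) ord0 ord0.
  by rewrite mxE; apply: eq_bigr => i _; rewrite mxE expr2.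
by move=> oQ; rewrite !sqnormE trmx_mul -mulmxA (mulmxA Q^T) oQ mul1mx.
Qed.

Lemma frob_orthogonall n p (Q : 'M[R]_n) (M : 'M[R]_(n, p)) :
  orthogonal_mx Q -> frob (Q *m M) = frob M.
Proof.
move=> oQ; rewrite !frob_col; apply: eq_bigr => j _.
by rewrite !colE -mulmxA sqnorm_orthogonal.
Qed.

Lemma frob_orthogonalr n p (Q : 'M[R]_n) (M : 'M[R]_(p, n)) :
  orthogonal_mx Q -> frob (M *m Q) = frob M.
Proof.
by move=> oQ; rewrite -frob_tr trmx_mul frob_orthogonall ?frob_tr //; apply: orthogonal_trmx.
Qed.

Lemma sqnorm_sum_le (I : Type) (s : seq I) (c : I -> R) n (v : I -> 'cV[R]_n) :
  sqnorm (\sum_(k <- s) c k *: v k) <=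
  (\sum_(k <- s) c k ^+ 2) * \sum_(k <- s) sqnorm (v k).
Proof.
have -> : \sum_(k <- s) sqnorm (v k) = \sum_i \sum_(k <- s) v k i ord0 ^+ 2.
  exact: exchange_big.
rewrite /sqnorm mulr_sumr; apply: ler_sum => i _.
rewrite summxE; under eq_bigr => k _ do rewrite mxE.
exact: cauchy_schwarz.
Qed.

End SquaredNorms.

Section Subgroup.
Variables (R : realType) (d : nat).
Local Notation Eu := (Eu R d).
Local Notation eid := (eid R d).
Implicit Types (g h k w : Eu).
Variable G : set Eu.
Hypothesis hG : is_subgroup G.

Lemma G_orth g : G g -> orthogonal_mx (rot g).
Proof. by case: hG => o _ _ _; apply: o. Qed.

Lemma G1 : G eid.
Proof. by case: hG. Qed.

Lemma G_mul g h : G g -> G h -> G (emul g h).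
Proof. by case: hG => _ _ m _; apply: m. Qed.

Lemma G_inv g : G g -> G (einv g).
Proof. by case: hG => _ _ _ i; apply: i. Qed.

Section Representatives.
Variables (H : set Eu) (C : seq Eu).
Hypotheses (hN : normal_sub H G) (hC : is_reps G H C).

Definition periodic_fun (T : Type) (f : Eu -> T) :=
  forall g t, G g -> H t -> f (emul g t) = f g.

Lemma reps_G c : c \in C -> G c.
Proof. by case: hC => _ h _ _; apply: h. Qed.

Lemma H_conj w t : G w -> H t -> H (emul (emul (einv w) t) w).
Proof.
move=> Gw Ht; case: hN => _ _ n.
by have := n (einv w) t (G_inv Gw) Ht; rewrite (einvK (G_orth Gw)).
Qed.

Lemma periodic_rmul (T : Type) (f : Eu -> T) w :
  G w -> periodic_fun f -> periodic_fun (fun g => f (emul g w)).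
Proof.
move=> Gw pf g t Gg Ht /=.
have -> : emul (emul g t) w = emul (emul g w) (emul (emul (einv w) t) w).
  by rewrite !emulA (emulKV _ (G_orth Gw)).
by apply: pf; [apply: G_mul | apply: H_conj].
Qed.

Lemma periodic_mul (f1 f2 : Eu -> R) :
  periodic_fun f1 -> periodic_fun f2 -> periodic_fun (fun g => f1 g * f2 g).
Proof. by move=> p1 p2 g t Gg Ht /=; rewrite p1 // p2. Qed.

(* Right multiplication by [w] permutes the cosets [c H]. *)
Lemma reps_rmul_perm w : G w -> exists pi : Eu -> Eu,
  perm_eq (map pi C) C /\ forall c, c \in C -> H (emul (einv (pi c)) (emul c w)).
Proof.
move=> Gw; have [uC _ hcov hsep] := hC.
have ex c : exists c', c \in C -> c' \in C /\ H (emul (einv c') (emul c w)).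
  case: (boolP (c \in C)) => cC; last by exists c.
  by have [c' c'C Hc'] := hcov _ (G_mul (reps_G cC) Gw); exists c'.
have [pi hpi] := choice ex; exists pi; split=> [|c /hpi []//].
have inj : {in C &, injective pi}.
  move=> c1 c2 c1C c2C e; have [p1C H1] := hpi c1 c1C; have [p2C H2] := hpi c2 c2C.
  rewrite e in H1; apply: hsep => //.
  have [[_ _ hm hi] _ _] := hN.
  have := H_conj (G_inv Gw) (hm _ _ (hi _ H1) H2).
  have oc1 := G_orth (reps_G c1C); have op := G_orth (reps_G p2C).
  have ow := G_orth Gw.
  have op' : orthogonal_mx (rot (einv (pi c2))) := orthogonal_trmx op.
  rewrite (einvM _ op') (einvK op) (einvM _ oc1) (einvK ow) !emulA.
  by rewrite (emulKV _ ow) (emulKV _ op) (emulgV ow) emulg1.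
have sub : {subset map pi C <= C} by move=> x /mapP [c /hpi [] ? _ ->].
have uC' : uniq (map pi C) by rewrite map_inj_in_uniq.
have [_ eqi] := uniq_min_size uC' sub (eq_leq (esym (size_map pi C))).
exact: uniq_perm.
Qed.

Lemma sum_reps_rmul (f : Eu -> R) w : G w -> periodic_fun f ->
  \sum_(c <- C) f (emul c w) = \sum_(c <- C) f c.
Proof.
move=> Gw pf; have [pi [pC hpi]] := reps_rmul_perm Gw.
have Cpi : perm_eq C (map pi C) by rewrite perm_sym.
rewrite [RHS](perm_big _ Cpi) big_map big_seq [RHS]big_seq; apply: eq_bigr => c cC.
have piC : pi c \in C by rewrite -(perm_mem pC); apply: map_f.
rewrite -(emulKV (emul c w) (G_orth (reps_G piC))).
by apply: pf; [apply: reps_G | apply: hpi].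
Qed.

End Representatives.

Section Words.
Variable R' : set Eu.
Hypothesis hgen : generates G R'.

Definition symgen s := R' s \/ exists2 r, R' r & s = einv r.
Definition eprod (l : seq Eu) := foldr (@emul R d) eid l.

Lemma gen_G r : R' r -> G r.
Proof. by case: hgen => s _; apply: s. Qed.

Lemma symgen_G s : symgen s -> G s.
Proof. by case=> [/gen_G // | [r /gen_G Gr ->]]; apply: G_inv. Qed.

Lemma symgen_inv s : symgen s -> symgen (einv s).
Proof.
case=> [Rs | [r Rr ->]]; first by right; exists s.
by left; rewrite (einvK (G_orth (gen_G Rr))).
Qed.

Lemma eprod_cat l1 l2 : eprod (l1 ++ l2) = emul (eprod l1) (eprod l2).
Proof. by elim: l1 => [|s l IH] /=; rewrite ?emul1g // IH emulA. Qed.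

Lemma eprod_inv l : {in l, forall s, G s} -> einv (eprod l) = eprod (rev (map (@einv R d) l)).
Proof.
elim: l => [|s l IH] Gl /=; first exact: einv1.
have os : orthogonal_mx (rot s) by apply: G_orth; apply: Gl; rewrite mem_head.
rewrite einvM // IH => [|x xl]; last by apply: Gl; rewrite in_cons xl orbT.
by rewrite rev_cons -cats1 eprod_cat /= emulg1.
Qed.

Lemma generates_eprod g : G g -> exists2 l, {in l, forall s, symgen s} & g = eprod l.
Proof.
pose W g := G g /\ exists2 l, {in l, forall s, symgen s} & g = eprod l.
suff /(_ g) sGW : G `<=` W by move=> /sGW [].
have [sR'G genG] := hgen; apply: genG; last first.
  move=> r Rr; split; first exact: sR'G.
  by exists [:: r]; [move=> s; rewrite inE => /eqP ->; left | rewrite /= emulg1].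
split.
- by move=> x [Gx _]; apply: G_orth.
- by split; [apply: G1 | exists [::]].
- move=> x y [Gx [l1 h1 ex]] [Gy [l2 h2 ey]]; split; first exact: G_mul Gx Gy.
  exists (l1 ++ l2); last by rewrite eprod_cat ex ey.
  by move=> s; rewrite mem_cat => /orP [/h1 | /h2].
- move=> x [Gx [l hl ex]]; split; first exact: G_inv Gx.
  exists (rev (map (@einv R d) l)); last by rewrite ex; apply: eprod_inv => s /hl /symgen_G.
  by move=> s; rewrite mem_rev => /mapP [r /hl rl ->]; apply: symgen_inv.
Qed.

End Words.
End Subgroup.

Section AffineStability.
Variables (R : realType) (d : nat).
Local Notation Eu := (Eu R d).
Local Notation eid := (eid R d).
Variables (G : set Eu) (x0 : 'cV[R]_d) (R'' : seq Eu) (B : 'M[R]_d).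
Hypotheses (hG : is_subgroup G) (hB : B \in unitmx) (hBG : forall i, G (1%:M, col i B))
  (hp1 : property1 G x0 R'').

Lemma mulmx_cols (v : 'cV[R]_d) : B *m v = \sum_i v i ord0 *: col i B.
Proof.
apply/matrixP => a b; rewrite mxE summxE; apply: eq_bigr => i _.
by rewrite !mxE (ord1 b) mulrC.
Qed.

(* The translations [(I | col i B)] put [x0 + e_j] in [aff (G x0)], which is
   [aff (R'' x0)] by Property 1. *)
Lemma unit_shift_in_aff (j : 'I_d) : exists s : seq ('cV[R]_d * R),
  [/\ forall p, p \in s -> exists2 h, h \in R'' & p.1 = eact h x0,
      \sum_(p <- s) p.2 = 1 &
      x0 + delta_mx j ord0 = \sum_(p <- s) p.2 *: p.1].
Proof.
set e := delta_mx j ord0 : 'cV[R]_d; set v := invmx B *m e.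
have inG : aff [set eact g x0 | g in G] (x0 + e).
  exists ((x0, 1 - \sum_i v i ord0) ::
          map (fun i => (x0 + col i B, v i ord0)) (index_enum 'I_d)); split.
  - move=> p; rewrite inE => /orP [/eqP -> | /mapP [i _ ->]] /=.
      by exists eid; [apply: G1 | rewrite eact1].
    by exists (1%:M, col i B) => //; rewrite /eact /= mul1mx.
  - by rewrite big_cons big_map /= subrK.
  - rewrite big_cons big_map /=.
    have -> : e = B *m v by rewrite /v mulKVmx.
    rewrite mulmx_cols.
    under [X in _ = _ + X]eq_bigr => i _ do rewrite scalerDr.
    by rewrite big_split /= -scaler_suml addrA -scalerDl subrK scale1r.
have [_ _ _ haff] := hp1.
rewrite -haff in inG; case: inG => s [h1 h2 h3].
by exists s; split => // p /h1 [h hR <-]; exists h.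
Qed.

(* Writing each [e_j] as an affine combination of the [h x0 - x0] recovers the
   columns of [M Q] from the values of the affine map on [R''] by Cauchy-Schwarz. *)
Lemma affine_fit_stability : exists Ks : R, 0 <= Ks /\
  forall (Q M : 'M[R]_d) (a : 'cV[R]_d) (eps : R), orthogonal_mx Q ->
    (forall h, h \in R'' -> sqnorm (a + M *m (Q *m (eact h x0 - x0))) <= eps) ->
    frob M <= Ks * eps.
Proof.
have [S hS] := choice unit_shift_in_aff.
exists (\sum_j (2 * (\sum_(p <- S j) p.2 ^+ 2) * (size (S j))%:R + 2)); split.
  apply: sumr_ge0 => j _; apply: addr_ge0 => //; apply: mulr_ge0 => //.
  by apply: mulr_ge0 => //; apply: sum_sqr_ge0.
move=> Q M a eps oQ hyp.
have [_ _ eR'' _] := hp1.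
have ha : sqnorm a <= eps by have := hyp _ eR''; rewrite eact1 subrr !mulmx0 addr0.
have eps0 : 0 <= eps by apply: le_trans ha; apply: sqnorm_ge0.
rewrite -(frob_orthogonalr M oQ) frob_col mulr_suml; apply: ler_sum => j _.
set M' := M *m Q.
have [h1 h2 h3] := hS j.
have ej : delta_mx j ord0 = \sum_(p <- S j) p.2 *: (p.1 - x0).
  under eq_bigr => p _ do rewrite scalerBr.
  by rewrite sumrB -h3 -scaler_suml h2 scale1r addrC addKr.
have -> : col j M' = \sum_(p <- S j) p.2 *: (a + M' *m (p.1 - x0)) - a.
  under eq_bigr => p _ do rewrite scalerDr.
  rewrite big_split /= -scaler_suml h2 scale1r addrAC subrr add0r.
  by rewrite colE ej mulmx_sumr; apply: eq_bigr => p _; rewrite scalemxAr.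
apply: le_trans (sqnormD_le _ _) _; rewrite sqnormN.
have hv : \sum_(p <- S j) sqnorm (a + M' *m (p.1 - x0)) <= (size (S j))%:R * eps.
  rewrite -sumr_const_seq big_seq [X in _ <= X]big_seq.
  by apply: ler_sum => p /h1 [h hR ->]; rewrite /M' -mulmxA; apply: hyp.
have hcs := sqnorm_sum_le (S j) (fun p => p.2) (fun p => a + M' *m (p.1 - x0)).
have hs0 := sum_sqr_ge0 (S j) (fun p => p.2).
set X := sqnorm _ in hcs *.
set Y := \sum_(p <- S j) p.2 ^+ 2 in hcs hs0 *.
set Z := \sum_(p <- S j) sqnorm _ in hcs hv.
have : Y * Z <= Y * ((size (S j))%:R * eps) by apply: ler_wpM2l.
nra.
Qed.

End AffineStability.

Section LocalFits.
Variables (R : realType) (d : nat).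
Local Notation Eu := (Eu R d).
Local Notation eid := (eid R d).
Variables (G : set Eu) (x0 : 'cV[R]_d) (Rs : seq Eu).

Definition local_fit (u a : Eu -> 'cV[R]_d) (S : Eu -> 'M[R]_d) (rr : Eu -> R) :=
  (forall g, 0 <= rr g) /\
  (forall g, G g -> forall h, h \in Rs ->
     sqnorm (rot h *m u (emul g h) - a g - S g *m (eact h x0 - x0)) <= rr g).

Section Frame.
Variables (u a : Eu -> 'cV[R]_d) (S : Eu -> 'M[R]_d).

(* The fits rewritten in the ambient frame: at [g] the fitted motion is
   [y |-> frame_a g + frame_S g (y - g x0)], and [rigid_defect g w] is the
   error of this motion at the point [g w x0]. *)
Definition frame_u z := rot z *m u z.
Definition frame_a g := rot g *m a g.
Definition frame_S g := rot g *m S g *m (rot g)^T.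
Definition rigid_defect g w :=
  frame_u (emul g w) - frame_u g - frame_S g *m (eact (emul g w) x0 - eact g x0).
Definition defect_sq g w :=
  sqnorm (rigid_defect g w) + frob (frame_S (emul g w) - frame_S g).

Lemma eact_emul_sub g w : eact (emul g w) x0 - eact g x0 = rot g *m (eact w x0 - x0).
Proof. by rewrite eactM eactB. Qed.

Lemma rigid_defect1 g : rigid_defect g eid = 0.
Proof. by rewrite /rigid_defect emulg1 !subrr mulmx0 subrr. Qed.

Lemma rigid_defect_mul g s w : rigid_defect g (emul s w) =
  rigid_defect (emul g s) w + rigid_defect g s +
  (frame_S (emul g s) - frame_S g) *m (eact (emul (emul g s) w) x0 - eact (emul g s) x0).
Proof.
rewrite /rigid_defect -emulA !mulmxBr !mulmxBl.
by apply/matrixP => ? ?; rewrite !mxE; ring.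
Qed.

End Frame.

Section Propagation.
Variables (R' : set Eu) (R'' : seq Eu).
Hypotheses (hG : is_subgroup G) (hgen : generates G R') (R'1 : R' eid)
  (eR'' : eid \in R'') (hRs : forall g h, R' g -> h \in R'' -> emul g h \in Rs).
Variable Ks : R.
Hypotheses (Ks0 : 0 <= Ks) (hKs : forall (Q M : 'M[R]_d) (a : 'cV[R]_d) (eps : R),
    orthogonal_mx Q ->
    (forall h, h \in R'' -> sqnorm (a + M *m (Q *m (eact h x0 - x0))) <= eps) ->
    frob M <= Ks * eps).

Lemma gen_in_patch r : R' r -> r \in Rs.
Proof. by move=> Rr; have := hRs Rr eR''; rewrite emulg1. Qed.

Lemma base_in_patch h : h \in R'' -> h \in Rs.
Proof. by move=> hR; have := hRs R'1 hR; rewrite emul1g. Qed.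

Section Fit.
Variables (u a : Eu -> 'cV[R]_d) (S : Eu -> 'M[R]_d) (rr : Eu -> R).
Hypothesis hfit : local_fit u a S rr.
Local Notation Y := (frame_u u).
Local Notation A := (frame_a a).
Local Notation Sg := (frame_S S).
Local Notation Del := (rigid_defect u S).

Lemma rr_ge0 g : 0 <= rr g.
Proof. by case: hfit. Qed.

Lemma frame_S_rot g (v : 'cV[R]_d) : G g -> Sg g *m (rot g *m v) = rot g *m (S g *m v).
Proof.
move=> Gg; rewrite /frame_S -!mulmxA; congr (_ *m _); congr (_ *m _).
by rewrite mulmxA (G_orth hG Gg) mul1mx.
Qed.

Lemma local_fit_frame g h : G g -> h \in Rs ->
  sqnorm (Y (emul g h) - A g - Sg g *m (eact (emul g h) x0 - eact g x0)) <= rr g.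
Proof.
move=> Gg hR; rewrite eact_emul_sub frame_S_rot // /frame_u /frame_a rot_emul -mulmxA.
rewrite -!mulmxBr (sqnorm_orthogonal _ (G_orth hG Gg)).
by case: hfit => _; apply.
Qed.

(* Both [g] and [g r] fit the patch [g r R''], so the difference of the two
   fitted motions is small there, and [affine_fit_stability] controls its
   linear part. *)
Lemma defect_gen_le g r : G g -> R' r ->
  sqnorm (Del g r) <= 4 * rr g /\
  frob (Sg (emul g r) - Sg g) <= Ks * (2 * rr g + 2 * rr (emul g r)).
Proof.
move=> Gg Rr; have Ggr := G_mul hG Gg (gen_G hgen Rr).
split.
  have -> : Del g r = (Y (emul g r) - A g - Sg g *m (eact (emul g r) x0 - eact g x0))
     - (Y (emul g eid) - A g - Sg g *m (eact (emul g eid) x0 - eact g x0)).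
    by rewrite emulg1 subrr mulmx0 subr0 /rigid_defect; apply/matrixP => ? ?; rewrite !mxE; ring.
  have := sqnormB_le (local_fit_frame Gg (gen_in_patch Rr))
                     (local_fit_frame Gg (base_in_patch eR'')).
  by move/le_trans; apply; rewrite -mulrDl; apply: ler_wpM2r; [apply: rr_ge0 | lra].
apply: (hKs (Q := rot (emul g r))
   (a := A (emul g r) - A g - Sg g *m (eact (emul g r) x0 - eact g x0))).
  by apply: (G_orth hG).
move=> h hR; set z := emul g (emul r h).
have h1 := local_fit_frame Gg (hRs Rr hR).
have h2 := local_fit_frame Ggr (base_in_patch hR); rewrite emulA -/z in h2.
have ez : eact z x0 - eact (emul g r) x0 = rot (emul g r) *m (eact h x0 - x0).
  by rewrite /z -emulA eact_emul_sub.
rewrite -ez; apply: le_trans (sqnormB_le h1 h2); rewrite le_eqVlt; apply/orP; left.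
apply/eqP; congr sqnorm; rewrite mulmxBl !mulmxBr.
by apply/matrixP => ? ?; rewrite !mxE; ring.
Qed.

Lemma defect_sq_gen_le g r : G g -> R' r ->
  defect_sq u S g r <= (4 + 2 * Ks) * (rr g + rr (emul g r)).
Proof.
move=> Gg Rr; have [h1 h2] := defect_gen_le Gg Rr.
have := rr_ge0 g; have := rr_ge0 (emul g r); rewrite /defect_sq; nra.
Qed.

Lemma defect_sq_gen_inv_le g r : G g -> R' r ->
  defect_sq u S g (einv r) <=
  (8 + 4 * sqnorm (eact r x0 - x0) * Ks + 2 * Ks) * (rr g + rr (emul g (einv r))).
Proof.
move=> Gg Rr; have Gr := gen_G hgen Rr; have or := G_orth hG Gr.
set cr := sqnorm (eact r x0 - x0); have cr0 : 0 <= cr by apply: sqnorm_ge0.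
set g2 := emul g (einv r).
have G2 : G g2 by apply: G_mul; last apply: G_inv.
have e2 : emul g2 r = g by rewrite /g2 emulA emulVg // emulg1.
have [h1 h2] := defect_gen_le G2 Rr; rewrite e2 in h1 h2.
have eD : Del g (einv r) = - Del g2 r + (Sg g - Sg g2) *m (eact g x0 - eact g2 x0).
  rewrite /rigid_defect -/g2 e2 !mulmxBr !mulmxBl.
  by apply/matrixP => ? ?; rewrite !mxE; ring.
have ec : sqnorm (eact g x0 - eact g2 x0) = cr.
  by rewrite -{1}e2 eact_emul_sub (sqnorm_orthogonal _ (G_orth hG G2)).
have h4 := sqnorm_mulmx_frob_le (eact g x0 - eact g2 x0) h2; rewrite ec in h4.
have h5 : sqnorm (Del g (einv r)) <= 2 * (4 * rr g2) + 2 * (Ks * (2 * rr g2 + 2 * rr g) * cr).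
  by rewrite eD; apply: le_trans (sqnormD_le _ _) _; rewrite sqnormN; apply: lerD; apply: ler_wpM2l.
rewrite /defect_sq -/g2 -frobN opprB.
have := rr_ge0 g; have := rr_ge0 g2; nra.
Qed.

Lemma defect_sq_mul_le g s w (K1 K2 : R) : G g -> G s ->
  defect_sq u S (emul g s) w <= K1 -> defect_sq u S g s <= K2 ->
  defect_sq u S g (emul s w) <= 6 * K1 + (6 + 2 * sqnorm (eact w x0 - x0)) * K2.
Proof.
rewrite /defect_sq => Gg Gs hA hB; have Ggs := G_mul hG Gg Gs.
set cw := sqnorm (eact w x0 - x0); have cw0 : 0 <= cw by apply: sqnorm_ge0.
have [hA1 hA2] : sqnorm (Del (emul g s) w) <= K1 /\
                 frob (Sg (emul (emul g s) w) - Sg (emul g s)) <= K1.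
  by split; apply: le_trans hA; rewrite ?lerDl ?lerDr ?frob_ge0 ?sqnorm_ge0.
have [hB1 hB2] : sqnorm (Del g s) <= K2 /\ frob (Sg (emul g s) - Sg g) <= K2.
  by split; apply: le_trans hB; rewrite ?lerDl ?lerDr ?frob_ge0 ?sqnorm_ge0.
have ec : sqnorm (eact (emul (emul g s) w) x0 - eact (emul g s) x0) = cw.
  by rewrite eact_emul_sub (sqnorm_orthogonal _ (G_orth hG Ggs)).
have hE := sqnorm_mulmx_frob_le (eact (emul (emul g s) w) x0 - eact (emul g s) x0) hB2.
rewrite ec in hE.
have K20 : 0 <= K2 by apply: le_trans hB2; apply: frob_ge0.
have h1 : sqnorm (Del g (emul s w)) <= 4 * K1 + 4 * K2 + 2 * (K2 * cw).
  rewrite rigid_defect_mul; apply: le_trans (sqnormD_le _ _) _.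
  have h0 := sqnormD_le (Del (emul g s) w) (Del g s); lra.
have h2 : frob (Sg (emul g (emul s w)) - Sg g) <= 2 * K1 + 2 * K2.
  have -> : Sg (emul g (emul s w)) - Sg g =
      (Sg (emul (emul g s) w) - Sg (emul g s)) + (Sg (emul g s) - Sg g).
    by rewrite -emulA addrA subrK.
  by apply: le_trans (frobD_le _ _) _; apply: lerD; apply: ler_wpM2l.
have := lerD h1 h2; lra.
Qed.

End Fit.

Definition defect_bounded (K : R) (P : seq Eu) (w : Eu) :=
  [/\ 0 <= K, {in P, forall p, G p} &
      forall u a S rr, local_fit u a S rr -> forall g, G g ->
        defect_sq u S g w <= K * \sum_(p <- P) rr (emul g p)].

Lemma defect_bounded_symgen s : symgen R' s -> exists K, defect_bounded K [:: eid; s] s.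
Proof.
have sum2 (rr : Eu -> R) g w : \sum_(p <- [:: eid; w]) rr (emul g p) = rr g + rr (emul g w).
  by rewrite big_cons big_seq1 emulg1.
case=> [Rr | [r Rr ->]].
  exists (4 + 2 * Ks); split.
  - by apply: addr_ge0 => //; apply: mulr_ge0.
  - by move=> p; rewrite !inE => /orP [] /eqP ->; [apply: G1 | apply: (gen_G hgen Rr)].
  - by move=> u a S rr hf g Gg; rewrite sum2; exact: (defect_sq_gen_le hf Gg Rr).
have cr0 := sqnorm_ge0 (eact r x0 - x0).
exists (8 + 4 * sqnorm (eact r x0 - x0) * Ks + 2 * Ks); split.
- apply: addr_ge0; last exact: mulr_ge0.
  by apply: addr_ge0 => //; apply: mulr_ge0 => //; apply: mulr_ge0.
- move=> p; rewrite !inE => /orP [] /eqP ->; first exact: G1.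
  exact: G_inv (gen_G hgen Rr).
- by move=> u a S rr hf g Gg; rewrite sum2; exact: (defect_sq_gen_inv_le hf Gg Rr).
Qed.

Lemma defect_bounded_eprod l : {in l, forall s, symgen R' s} ->
  exists K P, defect_bounded K P (eprod l).
Proof.
elim: l => [|s l IH] hl.
  exists 0, [::]; split => // u a S rr _ g Gg.
  by rewrite /defect_sq /= rigid_defect1 emulg1 subrr frob0 sqnorm0 !mul0r addr0.
have Ss : symgen R' s by apply: hl; rewrite mem_head.
have Gs := symgen_G hG hgen Ss.
have [K' [P' [K'0 GP' hP']]] : exists K P, defect_bounded K P (eprod l).
  by apply: IH => x xl; apply: hl; rewrite in_cons xl orbT.
have [K1 [K10 GP1 hK1]] := defect_bounded_symgen Ss.
set w := eprod l; set cw := sqnorm (eact w x0 - x0); have cw0 : 0 <= cw by apply: sqnorm_ge0.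
exists (6 * K' + (6 + 2 * cw) * K1), ([:: eid; s] ++ map (emul s) P'); split.
- by apply: addr_ge0; apply: mulr_ge0 => //; apply: addr_ge0 => //; apply: mulr_ge0.
- move=> p; rewrite mem_cat => /orP [/GP1 // | /mapP [q qP ->]].
  by apply: G_mul => //; apply: GP'.
move=> u a S rr hf g Gg; rewrite [eprod _]/= -/w.
have Ggs := G_mul hG Gg Gs.
apply: le_trans (defect_sq_mul_le Gg Gs (hP' _ _ _ _ hf _ Ggs) (hK1 _ _ _ _ hf _ Gg)) _.
set X := \sum_(p <- [:: eid; s]) _; set T := \sum_(p <- P') _.
have -> : \sum_(p <- [:: eid; s] ++ map (emul s) P') rr (emul g p) = X + T.
  by rewrite big_cat big_map; congr (_ + _); apply: eq_bigr => p _; rewrite emulA.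
have T0 : 0 <= T by apply: sumr_ge0 => p _; apply: rr_ge0 hf _.
have X0 : 0 <= X by apply: sumr_ge0 => p _; apply: rr_ge0 hf _.
have := mulr_ge0 K'0 X0; have := mulr_ge0 K10 T0; have := mulr_ge0 cw0 (mulr_ge0 K10 T0).
rewrite -/w -/cw; lra.
Qed.

End Propagation.

Lemma defect_bounded_mono K P K' P' w :
  defect_bounded K P w -> K <= K' -> {in P', forall p, G p} ->
  (forall f : Eu -> R, (forall x, 0 <= f x) -> \sum_(p <- P) f p <= \sum_(p <- P') f p) ->
  defect_bounded K' P' w.
Proof.
move=> [K0 _ hKP] KK' GP' sPP'; split => //; first exact: le_trans KK'.
move=> u a S rr hf g Gg; apply: le_trans (hKP _ _ _ _ hf _ Gg) _.
have rr0 := rr_ge0 hf.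
apply: ler_pM => //; first by apply: sumr_ge0.
by apply: (sPP' (fun p => rr (emul g p))).
Qed.

Section Generated.
Variables (R' : set Eu) (R'' : seq Eu) (B : 'M[R]_d).
Hypotheses (hG : is_subgroup G) (hB : B \in unitmx) (hBG : forall i, G (1%:M, col i B))
  (hgen : generates G R') (R'1 : R' eid) (hp1 : property1 G x0 R'')
  (hRs : forall g h, R' g -> h \in R'' -> emul g h \in Rs).

Lemma defect_bounded_G w : G w -> exists K P, defect_bounded K P w.
Proof.
move=> Gw; have [l hl ->] := generates_eprod hG hgen Gw.
have [_ _ eR'' _] := hp1.
have [Ks [Ks0 hKs]] := affine_fit_stability hG hB hBG hp1.
exact: (defect_bounded_eprod hG hgen R'1 eR'' hRs Ks0 hKs hl).
Qed.

Lemma defect_bounded_seq (ws : seq Eu) : {in ws, forall w, G w} ->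
  exists K P, [/\ 0 <= K, {in P, forall p, G p} & {in ws, forall w, defect_bounded K P w}].
Proof.
elim: ws => [|w ws IH] Gws; first by exists 0, [::].
have [K1 [P1 hw]] := defect_bounded_G (Gws w (mem_head _ _)).
have [K2 [P2 [K20 GP2 hws]]] : exists K P,
    [/\ 0 <= K, {in P, forall p, G p} & {in ws, forall w, defect_bounded K P w}].
  by apply: IH => x xws; apply: Gws; rewrite in_cons xws orbT.
have [K10 GP1 _] := hw.
have GP : {in P1 ++ P2, forall p, G p} by move=> p; rewrite mem_cat => /orP [/GP1 | /GP2].
exists (K1 + K2), (P1 ++ P2); split => //; first exact: addr_ge0.
move=> x; rewrite in_cons => /predU1P [-> | /hws hx].
  apply: (defect_bounded_mono hw) => //; first by rewrite lerDl.
  by move=> f f0; rewrite big_cat lerDl; apply: sumr_ge0.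
apply: (defect_bounded_mono hx) => //; first by rewrite lerDr.
by move=> f f0; rewrite big_cat lerDr; apply: sumr_ge0.
Qed.

End Generated.
End LocalFits.

Section LatticeKorn.
Variables (R : realType) (d : nat).
Local Notation Eu := (Eu R d).
Variables (G H : set Eu) (C : seq Eu).
Hypotheses (hG : is_subgroup G) (hN : normal_sub H G) (hC : is_reps G H C).

Definition transl (v : 'cV[R]_d) : Eu := (1%:M, v).

Lemma emul_transl g v w : emul (emul g (transl v)) (transl w) = emul g (transl (v + w)).
Proof. by case: g => A a; rewrite /emul /transl /= !mulmx1 mulmxDr addrA. Qed.

Lemma transl0 g : emul g (transl 0) = g.
Proof. by rewrite /emul /transl /= mulmx1 mulmx0 addr0; case: g. Qed.

Lemma G_transl_opp v : G (transl v) -> G (transl (- v)).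
Proof. by move=> /(G_inv hG); rewrite /einv /transl /= trmx1 mul1mx. Qed.

Variable b : 'I_d -> 'cV[R]_d.
Hypothesis Gb : forall i, G (transl (b i)).
Variable phi : 'I_d -> Eu -> R.
Hypothesis phi_per : forall i, periodic_fun G H (phi i).

Local Notation dphi i j c := (phi i (emul c (transl (b j))) - phi i c).
Local Notation dphiV i c := (phi i (emul c (transl (- b i))) - phi i c).

(* Discrete analogue of [int d_j u_i d_i u_j = int d_i u_i d_j u_j] for
   periodic [u]: summation by parts over the representatives. *)
Lemma sum_cross_diff i j :
  \sum_(c <- C) dphi i j c * dphi j i c = \sum_(c <- C) dphiV i c * dphiV j c.
Proof.
have pexp (x y z w : R) : (x - y) * (z - w) = x * z - x * w - y * z + y * w by ring.
under eq_bigr => c _ do rewrite pexp.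
under [RHS]eq_bigr => c _ do rewrite pexp.
rewrite !big_split /= !sumrN.
have Gi' := G_transl_opp (Gb i); have Gj' := G_transl_opp (Gb j).
have shift k v : G (transl v) -> periodic_fun G H (fun c => phi k (emul c (transl v))).
  by move=> Gv; apply: (periodic_rmul hG hN Gv (phi_per k)).
have Gij : G (transl (b i + b j)).
  have -> : transl (b i + b j) = emul (transl (b i)) (transl (b j)).
    by rewrite /emul /transl /= !mul1mx.
  exact: G_mul.
have e1 : \sum_(c <- C) phi i (emul c (transl (b j))) * phi j (emul c (transl (b i))) =
          \sum_(c <- C) phi i (emul c (transl (- b i))) * phi j (emul c (transl (- b j))).
  set F := fun c => phi i (emul c (transl (- b i))) * phi j (emul c (transl (- b j))).
  have pF : periodic_fun G H F := periodic_mul (shift i _ Gi') (shift j _ Gj').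
  rewrite -(sum_reps_rmul hG hN hC (f := F) Gij pF).
  by apply: eq_bigr => c _; rewrite /F !emul_transl addrK [b i + _]addrC addrK.
have e2 : \sum_(c <- C) phi i (emul c (transl (b j))) * phi j c =
          \sum_(c <- C) phi i c * phi j (emul c (transl (- b j))).
  set F := fun c => phi i c * phi j (emul c (transl (- b j))).
  have pF : periodic_fun G H F := periodic_mul (phi_per i) (shift j _ Gj').
  rewrite -(sum_reps_rmul hG hN hC (f := F) (Gb j) pF).
  by apply: eq_bigr => c _; rewrite /F emul_transl subrr transl0.
have e3 : \sum_(c <- C) phi i c * phi j (emul c (transl (b i))) =
          \sum_(c <- C) phi i (emul c (transl (- b i))) * phi j c.
  set F := fun c => phi i (emul c (transl (- b i))) * phi j c.
  have pF : periodic_fun G H F := periodic_mul (shift i _ Gi') (phi_per j).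
  rewrite -(sum_reps_rmul hG hN hC (f := F) (Gb i) pF).
  by apply: eq_bigr => c _; rewrite /F emul_transl subrr transl0.
by rewrite e1 e2 e3; ring.
Qed.

Lemma sum_cross_diff_ge0 : 0 <= \sum_(c <- C) \sum_i \sum_j dphi i j c * dphi j i c.
Proof.
rewrite exchange_big /=; under eq_bigr => i _ do rewrite exchange_big /=.
under eq_bigr => i _ do under eq_bigr => j _ do rewrite sum_cross_diff.
under eq_bigr => i _ do rewrite exchange_big /=.
rewrite exchange_big /=; apply: sumr_ge0 => c _.
have -> : \sum_i \sum_j dphiV i c * dphiV j c = (\sum_i dphiV i c) ^+ 2.
  by rewrite expr2 mulr_suml; apply: eq_bigr => i _; rewrite mulr_sumr.
exact: sqr_ge0.
Qed.

(* Pointwise [dphi i j * dphi j i <= - K_ij^2 / 2 + 3/2 (E_ij^2 + E_ji^2)] with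
   [E = dphi - K]; summing against [sum_cross_diff_ge0] gives the bound. *)
Lemma korn_lattice (K : Eu -> 'M[R]_d) : (forall c, c \in C -> (K c)^T = - K c) ->
  \sum_(c <- C) frob (K c) <=
  6 * \sum_(c <- C) \sum_i \sum_j (dphi i j c - K c i j) ^+ 2.
Proof.
move=> Kskew; pose E c i j := dphi i j c - K c i j.
have pt c i j : c \in C ->
    dphi i j c * dphi j i c <= - (1/2) * K c i j ^+ 2 + 3 / 2 * (E c i j ^+ 2 + E c j i ^+ 2).
  move=> cC; have Kji : K c j i = - K c i j.
    by have := congr1 (fun M : 'M[R]_d => M i j) (Kskew c cC); rewrite !mxE.
  have -> : dphi i j c = K c i j + E c i j by rewrite /E addrCA subrr addr0.
  have -> : dphi j i c = - K c i j + E c j i by rewrite /E -Kji addrCA subrr addr0.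
  set k := K c i j; set e1 := E c i j; set e2 := E c j i.
  have := sqr_ge0 (k / 2 - (e2 - e1)); have := sqr_ge0 (e1 - e2); nra.
have sumE c : \sum_i \sum_j (E c i j ^+ 2 + E c j i ^+ 2) = 2 * \sum_i \sum_j E c i j ^+ 2.
  under eq_bigr => i _ do rewrite big_split /=.
  by rewrite big_split /= [X in _ + X]exchange_big /=; ring.
have pt_sum c : c \in C -> \sum_i \sum_j dphi i j c * dphi j i c <=
    - (1/2) * frob (K c) + 3 * \sum_i \sum_j E c i j ^+ 2.
  move=> cC; have : \sum_i \sum_j dphi i j c * dphi j i c <= \sum_i \sum_j
      (- (1/2) * K c i j ^+ 2 + 3 / 2 * (E c i j ^+ 2 + E c j i ^+ 2)).
    by apply: ler_sum => i _; apply: ler_sum => j _; apply: pt.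
  move/le_trans; apply.
  under eq_bigr => i _ do rewrite big_split /= -!mulr_sumr.
  by rewrite big_split /= -!mulr_sumr sumE /frob; lra.
have : \sum_(c <- C) \sum_i \sum_j dphi i j c * dphi j i c <=
    \sum_(c <- C) (- (1/2) * frob (K c) + 3 * \sum_i \sum_j E c i j ^+ 2).
  by rewrite big_seq [X in _ <= X]big_seq; apply: ler_sum => c; apply: pt_sum.
move/(le_trans sum_cross_diff_ge0); rewrite big_split /= -!mulr_sumr; lra.
Qed.

End LatticeKorn.

Section TranslationKorn.
Variables (R : realType) (d : nat).
Local Notation Eu := (Eu R d).
Variables (G H : set Eu) (C : seq Eu) (B : 'M[R]_d) (u : Eu -> 'cV[R]_d).
Hypotheses (hG : is_subgroup G) (hN : normal_sub H G) (hC : is_reps G H C)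
  (hB : B \in unitmx) (hBG : forall i, G (transl (col i B))) (hu : periodic G H u).

Definition korn_const := 6 * (frob (invmx B)^T * frob (invmx B)) * frob B^T.

Lemma korn_const_ge0 : 0 <= korn_const.
Proof. by rewrite !mulr_ge0 ?frob_ge0. Qed.

Lemma frob_conj_le (S : 'M[R]_d) :
  frob S <= frob (invmx B)^T * frob (invmx B) * frob (B^T *m S *m B).
Proof.
have eS : S = (invmx B)^T *m (B^T *m S *m B) *m invmx B.
  by rewrite !mulmxA -trmx_mul mulmxV // trmx1 mul1mx -mulmxA mulmxV // mulmx1.
rewrite {1}eS; apply: le_trans (frob_mulmx_le _ _) _; rewrite mulrAC.
apply: ler_wpM2r; [exact: frob_ge0 | exact: frob_mulmx_le].
Qed.

Lemma korn_translations (S : Eu -> 'M[R]_d) : (forall c, c \in C -> (S c)^T = - S c) ->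
  \sum_(c <- C) frob (S c) <= korn_const *
    \sum_(c <- C) \sum_j sqnorm (u (emul c (transl (col j B))) - u c - S c *m col j B).
Proof.
move=> Sskew; pose phi i g := (B^T *m u g) i ord0; pose K c := B^T *m S c *m B.
have phi_per i : periodic_fun G H (phi i) by move=> g t Gg Ht; rewrite /phi hu.
have Kskew c : c \in C -> (K c)^T = - K c.
  by move=> cC; rewrite /K !trmx_mul trmxK Sskew // mulNmx mulmxN mulmxA.
have korn := korn_lattice hG hN hC hBG phi_per Kskew.
set zeta := fun j c => u (emul c (transl (col j B))) - u c - S c *m col j B.
have entry c i j : phi i (emul c (transl (col j B))) - phi i c - K c i j =
    (B^T *m zeta j c) i ord0.
  have subE (M N : 'cV[R]_d) k : (M - N) k ord0 = M k ord0 - N k ord0 by rewrite !mxE.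
  rewrite /zeta /phi /K !mulmxBr !subE mulmxA !mxE; congr (_ - _).
  by apply: eq_bigr => k _; rewrite [col _ _ _ _]mxE.
have sq c : \sum_i \sum_j (phi i (emul c (transl (col j B))) - phi i c - K c i j) ^+ 2 <=
    frob B^T * \sum_j sqnorm (zeta j c).
  under eq_bigr => i _ do under eq_bigr => j _ do rewrite entry.
  rewrite exchange_big mulr_sumr; apply: ler_sum => j _; exact: sqnorm_mulmx_le.
set cI := frob (invmx B)^T * frob (invmx B).
have cI0 : 0 <= cI by rewrite mulr_ge0 ?frob_ge0.
have hS : \sum_(c <- C) frob (S c) <= cI * \sum_(c <- C) frob (K c).
  by rewrite mulr_sumr; apply: ler_sum => c _; apply: frob_conj_le.
have hE : \sum_(c <- C) \sum_i \sum_j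
    (phi i (emul c (transl (col j B))) - phi i c - K c i j) ^+ 2 <=
    frob B^T * \sum_(c <- C) \sum_j sqnorm (zeta j c).
  by rewrite mulr_sumr; apply: ler_sum => c _; apply: sq.
have -> : korn_const = cI * (6 * frob B^T) by rewrite /korn_const -/cI; ring.
apply: (le_trans hS); rewrite -mulrA; apply: ler_wpM2l => //.
by apply: (le_trans korn); rewrite -mulrA; apply: ler_wpM2l.
Qed.

End TranslationKorn.

Section Distances.
Variables (R : realType) (d : nat).
Local Notation Eu := (Eu R d).
Implicit Types (U : (Eu -> 'cV[R]_d) -> Prop) (v w : Eu -> 'cV[R]_d) (Rs : seq Eu).

Definition dist_set U Rs v := [set r : R | exists w, U w /\
  r = Num.sqrt (\sum_(h <- Rs) sqnorm (v h - w h))].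

Lemma dist_set_lb U Rs v : lbound (dist_set U Rs v) 0.
Proof. by move=> r [w [_ ->]]; apply: sqrtr_ge0. Qed.

Lemma dist_set_nonempty U Rs v : (exists w, U w) -> nonempty (dist_set U Rs v).
Proof. by case=> w Uw; exists (Num.sqrt (\sum_(h <- Rs) sqnorm (v h - w h))); exists w. Qed.

Lemma distU_ge0 U Rs v : (exists w, U w) -> 0 <= distU U Rs v.
Proof. by move=> ne; apply: lb_le_inf; [apply: dist_set_nonempty | apply: dist_set_lb]. Qed.

Lemma distU_le U Rs v w : U w -> distU U Rs v <= Num.sqrt (\sum_(h <- Rs) sqnorm (v h - w h)).
Proof.
by move=> Uw; apply: (ge_inf (E := dist_set U Rs v)); [exists 0; apply: dist_set_lb | exists w].
Qed.

Lemma distU_sq_le U Rs v w : U w -> distU U Rs v ^+ 2 <= \sum_(h <- Rs) sqnorm (v h - w h).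
Proof.
move=> Uw; have ne : exists w, U w by exists w.
rewrite -[X in _ <= X]sqr_sqrtr; last by apply: sumr_ge0 => h _; apply: sqnorm_ge0.
by rewrite ler_pXn2r ?nnegrE ?sqrtr_ge0 ?distU_ge0 ?distU_le.
Qed.

Lemma le_distU_sq U Rs v (x : R) : 0 <= x -> (exists w, U w) ->
  (forall w, U w -> x <= \sum_(h <- Rs) sqnorm (v h - w h)) -> x <= distU U Rs v ^+ 2.
Proof.
move=> x0 ne hx; rewrite -[x]sqr_sqrtr // ler_pXn2r ?nnegrE ?sqrtr_ge0 ?distU_ge0 //.
apply: lb_le_inf; first exact: dist_set_nonempty.
by move=> r [w [Uw ->]]; rewrite ler_sqrt ?hx //; apply: sumr_ge0 => h _; apply: sqnorm_ge0.
Qed.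

Lemma distU_approx U Rs v (del : R) : (exists w, U w) -> 0 < del ->
  exists2 w, U w & \sum_(h <- Rs) sqnorm (v h - w h) <= (distU U Rs v + del) ^+ 2.
Proof.
move=> ne d0; have hi : has_inf (dist_set U Rs v).
  by split; [apply: dist_set_nonempty | exists 0; apply: dist_set_lb].
have [r [w [Uw ->]] hr] := inf_adherent d0 hi; exists w => //.
rewrite -[X in X <= _]sqr_sqrtr; last by apply: sumr_ge0 => h _; apply: sqnorm_ge0.
have Dd0 : 0 <= distU U Rs v + del by rewrite addr_ge0 ?distU_ge0 ?ltW.
by rewrite ler_pXn2r ?nnegrE ?sqrtr_ge0 // ltW.
Qed.

Lemma eq_distU U Rs v v' : {in Rs, v =1 v'} -> distU U Rs v = distU U Rs v'.
Proof.
move=> e; rewrite /distU; congr inf; apply: funext => r; apply: propext.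
by split=> [] [w [Uw ->]]; exists w; split => //; congr Num.sqrt; apply: eq_big_seq => h hR;
  rewrite e.
Qed.

Lemma distU_sub U1 U2 Rs v : (forall w, U2 w -> U1 w) -> (exists w, U2 w) ->
  distU U1 Rs v <= distU U2 Rs v.
Proof.
move=> sub ne; apply: lb_le_inf; first exact: dist_set_nonempty.
by move=> r [w [Uw ->]]; apply: distU_le; apply: sub.
Qed.

End Distances.

Section PatchSeminorms.
Variables (R : realType) (d : nat).
Local Notation Eu := (Eu R d).
Local Notation eid := (eid R d).
Variables (G : set Eu) (x0 : 'cV[R]_d) (Rs : seq Eu).
Hypotheses (hG : is_subgroup G) (RsG : forall h, h \in Rs -> G h) (eRs : eid \in Rs).

Lemma Uiso_nonempty : exists w, Uiso x0 Rs w.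
Proof.
exists (fun _ => 0), 0, 0; split; first by rewrite trmx0 oppr0.
by move=> g _; rewrite mulmx0 mul0mx addr0.
Qed.

Lemma Uiso00_Uiso w : Uiso00 0 x0 Rs w -> Uiso x0 Rs w.
Proof. by case=> a [S [h1 _ h3]]; exists a, S. Qed.

(* With [d1 = 0] the block [S1] is empty, so [S = 0]: [U_iso,0,0] consists of
   the maps [w] with [rot h * w h] constant on [Rs]. *)
Lemma Uiso00_const (c : 'cV[R]_d) : Uiso00 0 x0 Rs (fun h => (rot h)^T *m c).
Proof.
exists c, 0; split; first by rewrite trmx0 oppr0.
  by move=> i j _; rewrite mxE.
move=> h hR; rewrite mul0mx addr0 mulmxA orthogonal_mxC ?mul1mx //.
exact: (G_orth hG (RsG hR)).
Qed.

Lemma Uiso00_nonempty : exists w, Uiso00 0 x0 Rs w.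
Proof. by exists (fun h => (rot h)^T *m 0); apply: Uiso00_const. Qed.

Lemma Uiso00P w : Uiso00 0 x0 Rs w -> exists c, forall h, h \in Rs -> w h = (rot h)^T *m c.
Proof.
case=> a [S [_ S0 hw]]; exists a => h hR.
have S00 : S = 0 by apply/matrixP => i j; rewrite mxE; apply: S0.
have oh := G_orth hG (RsG hR).
by rewrite -[w h]mul1mx -oh -mulmxA (hw _ hR) S00 mul0mx addr0.
Qed.

Variable u : Eu -> 'cV[R]_d.

Definition dist_iso g := distU (Uiso x0 Rs) Rs (fun h => u (emul g h)).
Definition dist_transl g := distU (Uiso00 0 x0 Rs) Rs (fun h => u (emul g h)).
Definition grad_sq g := \sum_(h <- Rs) sqnorm (u (emul g h) - (rot h)^T *m u g).

Lemma dist_iso_ge0 g : 0 <= dist_iso g.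
Proof. exact: distU_ge0 Uiso_nonempty. Qed.

Lemma dist_transl_ge0 g : 0 <= dist_transl g.
Proof. exact: distU_ge0 Uiso00_nonempty. Qed.

Lemma dist_iso_sq_le_transl g : dist_iso g ^+ 2 <= dist_transl g ^+ 2.
Proof.
rewrite ler_pXn2r ?nnegrE ?dist_iso_ge0 ?dist_transl_ge0 //.
by apply: distU_sub Uiso00_nonempty => w; apply: Uiso00_Uiso.
Qed.

Lemma dist_transl_sq_le_grad g : dist_transl g ^+ 2 <= grad_sq g.
Proof. exact: (distU_sq_le Rs (fun h => u (emul g h)) (Uiso00_const (u g))). Qed.

Definition grad_const : R := 2 + 2 * (size Rs)%:R.

Lemma grad_const_ge0 : 0 <= grad_const.
Proof. by rewrite addr_ge0 ?mulr_ge0. Qed.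

(* Since [eid \in Rs], the constant of the fit [w] is close to [u g]. *)
Lemma grad_sq_le_Uiso00 g w : Uiso00 0 x0 Rs w ->
  grad_sq g <= grad_const * \sum_(h <- Rs) sqnorm (u (emul g h) - w h).
Proof.
case/Uiso00P=> c hc; set rho := \sum_(h <- Rs) _.
have rho0 : 0 <= rho by apply: sumr_ge0 => h _; apply: sqnorm_ge0.
have hc0 : sqnorm (c - u g) <= rho.
  have := le_sum_mem (F := fun h => sqnorm (u (emul g h) - w h)) (fun y _ => sqnorm_ge0 _) eRs.
  by rewrite emulg1 (hc _ eRs) /= trmx1 mul1mx sqnormBC.
have : grad_sq g <= 2 * rho + 2 * ((size Rs)%:R * sqnorm (c - u g)).
  have -> : 2 * rho + 2 * ((size Rs)%:R * sqnorm (c - u g)) = \sum_(h <- Rs)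
      (2 * sqnorm (u (emul g h) - w h) + 2 * sqnorm (c - u g)).
    by rewrite big_split /= -!mulr_sumr -sumr_const_seq.
  rewrite /grad_sq big_seq [X in _ <= X]big_seq.
  apply: ler_sum => h hR.
  have -> : u (emul g h) - (rot h)^T *m u g = (u (emul g h) - w h) + (rot h)^T *m (c - u g).
    by rewrite (hc _ hR) mulmxBr addrA subrK.
  apply: le_trans (sqnormD_le _ _) _.
  by rewrite (sqnorm_orthogonal _ (orthogonal_trmx (G_orth hG (RsG hR)))).
have : (size Rs)%:R * sqnorm (c - u g) <= (size Rs)%:R * rho by apply: ler_wpM2l.
rewrite /grad_const; nra.
Qed.

Lemma grad_sq_le_dist_transl g : grad_sq g <= grad_const * dist_transl g ^+ 2.
Proof.
have c0 : 0 < grad_const by rewrite /grad_const ltr_wpDr ?mulr_ge0.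
rewrite -ler_pdivrMl //; apply: le_distU_sq Uiso00_nonempty _.
  have g0 : 0 <= grad_sq g by apply: sumr_ge0 => h _; apply: sqnorm_ge0.
  by rewrite mulr_ge0 // invr_ge0 ltW.
by move=> w Uw; rewrite ler_pdivrMl //; apply: grad_sq_le_Uiso00.
Qed.

End PatchSeminorms.

Section RealBounds.
Variable R : realType.

Lemma ler_addgt0_scale (x z k : R) : 0 <= k ->
  (forall del, 0 < del -> del <= 1 -> x <= z + del * k) -> x <= z.
Proof.
move=> k0 h; apply/ler_addgt0Pr => e e0.
have p : 0 < k + 1 + e by lra.
set del := e / (k + 1 + e).
have d0 : 0 < del by apply: divr_gt0.
have d1 : del <= 1 by rewrite ler_pdivrMr // mul1r; lra.
have dk : del * k <= e by rewrite /del mulrAC ler_pdivrMr //; nra.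
by apply: le_trans (h _ d0 d1) _; lra.
Qed.

Lemma sqrt_mul_le_scale (K m sa sb : R) : 1 <= K -> 0 <= m -> 0 <= sb -> sa <= K * sb ->
  Num.sqrt (m * sa) <= K * Num.sqrt (m * sb).
Proof.
move=> K1 m0 sb0 h; have K0 : 0 <= K by lra.
have -> : K * Num.sqrt (m * sb) = Num.sqrt (K ^+ 2 * (m * sb)).
  by rewrite (sqrtrM _ (sqr_ge0 K)) sqrtr_sqr ger0_norm.
rewrite ler_sqrt; last by rewrite !mulr_ge0 ?sqr_ge0.
have : m * sa <= m * (K * sb) by apply: ler_wpM2l.
have : K * (m * sb) <= K ^+ 2 * (m * sb).
  by apply: ler_wpM2r; [apply: mulr_ge0 | rewrite expr2 ler_peMl].
nra.
Qed.

End RealBounds.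

Section KornBound.
Variables (R : realType) (d : nat).
Local Notation Eu := (Eu R d).
Variables (G : set Eu) (x0 : 'cV[R]_d) (Rs : seq Eu).
Hypotheses (hG : is_subgroup G) (RsG : forall h, h \in Rs -> G h).

Definition patch_const := \sum_(h <- Rs) sqnorm (eact h x0 - x0).

Lemma patch_const_ge0 : 0 <= patch_const.
Proof. by apply: sumr_ge0 => h _; apply: sqnorm_ge0. Qed.

Definition korn_patch_const (B : 'M[R]_d) (K : R) (P : seq Eu) :=
  2 * (size Rs)%:R + 2 * patch_const * (korn_const B * (d%:R * K * (size P)%:R)).

Lemma korn_patch_const_ge0 B K P : 0 <= K -> 0 <= korn_patch_const B K P.
Proof.
move=> K0; apply: addr_ge0; first exact: mulr_ge0.
apply: mulr_ge0; first exact: mulr_ge0 _ patch_const_ge0.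
by apply: mulr_ge0; [apply: korn_const_ge0 | rewrite !mulr_ge0].
Qed.

Lemma rigid_defect_transl u S c v : G c ->
  rigid_defect x0 u S c (transl v) = rot c *m (u (emul c (transl v)) - u c - S c *m v).
Proof.
move=> Gc; have oc := G_orth hG Gc.
have ev : eact (transl v) x0 - x0 = v by rewrite /eact /= mul1mx addrAC subrr add0r.
rewrite /rigid_defect /frame_u eact_emul_sub ev /frame_S rot_emul /= mulmx1.
rewrite !mulmxBr -!mulmxA; congr (_ - _ *m _).
by rewrite (mulmxA (rot c)^T) oc mul1mx.
Qed.

Variable u : Eu -> 'cV[R]_d.
Local Notation D1 := (dist_iso x0 Rs u).
Local Notation D2 := (dist_transl x0 Rs u).

Lemma dist_transl_sq_le_fit a S rr g : local_fit G x0 Rs u a S rr -> G g ->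
  D2 g ^+ 2 <= 2 * (size Rs)%:R * rr g + 2 * patch_const * frob (S g).
Proof.
move=> [_ hfit] Gg.
apply: le_trans (distU_sq_le Rs (fun h => u (emul g h)) (Uiso00_const x0 hG RsG (a g))) _.
have -> : 2 * (size Rs)%:R * rr g + 2 * patch_const * frob (S g) = \sum_(h <- Rs)
    (2 * rr g + 2 * (frob (S g) * sqnorm (eact h x0 - x0))).
  by rewrite big_split /= sumr_const_seq -!mulr_sumr /patch_const; ring.
rewrite big_seq [X in _ <= X]big_seq; apply: ler_sum => h hR.
have oh := G_orth hG (RsG hR).
rewrite -(sqnorm_orthogonal _ oh) mulmxBr mulmxA orthogonal_mxC // mul1mx.
rewrite -(subrK (S g *m (eact h x0 - x0)) (rot h *m u (emul g h) - a g)).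
apply: le_trans (sqnormD_le _ _) _; apply: lerD; apply: ler_wpM2l => //.
  exact: hfit.
exact: sqnorm_mulmx_le.
Qed.

Lemma near_optimal_fit (del : R) : 0 < del -> exists a S rr,
  [/\ local_fit G x0 Rs u a S rr, forall g, (S g)^T = - S g &
      forall g, rr g <= (D1 g + del) ^+ 2].
Proof.
move=> d0.
have ex g : exists t : (Eu -> 'cV[R]_d) * 'cV[R]_d * 'M[R]_d,
   [/\ (forall h, h \in Rs -> rot h *m t.1.1 h = t.1.2 + t.2 *m (eact h x0 - x0)),
       t.2^T = - t.2 &
       \sum_(h <- Rs) sqnorm (u (emul g h) - t.1.1 h) <= (D1 g + del) ^+ 2].
  have [w [a [S [Sskew hw]]] hlt] := distU_approx Rs (fun h => u (emul g h)) (Uiso_nonempty x0 Rs) d0.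
  by exists (w, a, S).
have [f hf] := choice ex.
exists (fun g => (f g).1.2), (fun g => (f g).2),
       (fun g => \sum_(h <- Rs) sqnorm (u (emul g h) - (f g).1.1 h)).
split=> [|g|g]; last by have [] := hf g.
- split=> [g|g _ h hR]; first by apply: sumr_ge0 => h _; apply: sqnorm_ge0.
  have [hw _ _] := hf g.
  rewrite -addrA -opprD -(hw _ hR) -mulmxBr (sqnorm_orthogonal _ (G_orth hG (RsG hR))).
  by apply: (le_sum_mem (F := fun h => sqnorm (u (emul g h) - (f g).1.1 h))) => // y _;
    apply: sqnorm_ge0.
- by have [] := hf g.
Qed.

Section Representatives.
Variables (H : set Eu) (C : seq Eu).
Hypotheses (hN : normal_sub H G) (hC : is_reps G H C) (hu : periodic G H u).

Lemma dist_iso_periodic : periodic_fun G H D1.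
Proof.
move=> g t Gg Ht; apply: eq_distU => h hR /=.
have oh := G_orth hG (RsG hR).
have -> : emul (emul g t) h = emul (emul g h) (emul (emul (einv h) t) h).
  by rewrite !emulA (emulKV _ oh).
by apply: hu; [apply: G_mul => //; apply: RsG | exact: (H_conj hG hN (RsG hR) Ht)].
Qed.

Lemma sum_fit_le_reindex (rr : Eu -> R) (del : R) p : G p ->
  (forall g, rr g <= (D1 g + del) ^+ 2) ->
  \sum_(c <- C) rr (emul c p) <= \sum_(c <- C) (D1 c + del) ^+ 2.
Proof.
move=> Gp hrr; rewrite -(sum_reps_rmul hG hN hC (f := fun g => (D1 g + del) ^+ 2) Gp).
  by apply: ler_sum => c _; apply: hrr.
by move=> g t Gg Ht /=; rewrite dist_iso_periodic.
Qed.

Lemma sum_transl_defect_le (B : 'M[R]_d) a S rr K P : local_fit G x0 Rs u a S rr ->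
  (forall j, defect_bounded G x0 Rs K P (transl (col j B))) ->
  \sum_(c <- C) \sum_j sqnorm (u (emul c (transl (col j B))) - u c - S c *m col j B) <=
  d%:R * K * \sum_(p <- P) \sum_(c <- C) rr (emul c p).
Proof.
move=> hfit hKP.
have pt c : c \in C -> \sum_j sqnorm (u (emul c (transl (col j B))) - u c - S c *m col j B)
    <= d%:R * K * \sum_(p <- P) rr (emul c p).
  move=> cC; have Gc := reps_G hC cC.
  rewrite -mulrA mulr_natl -[in X in _ *+ X](card_ord d) -sumr_const; apply: ler_sum => j _.
  have [_ _ hj] := hKP j.
  rewrite -(sqnorm_orthogonal _ (G_orth hG Gc)) -rigid_defect_transl //.
  by apply: le_trans (hj _ _ _ _ hfit _ Gc); rewrite /defect_sq lerDl frob_ge0.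
rewrite [in X in _ <= X]exchange_big /= mulr_sumr big_seq [X in _ <= X]big_seq.
by apply: ler_sum => c cC; apply: pt.
Qed.

Lemma sum_dist_transl_le_fit B a S rr K P (Q : R) :
  B \in unitmx -> (forall i, G (transl (col i B))) ->
  local_fit G x0 Rs u a S rr -> (forall c, (S c)^T = - S c) ->
  0 <= K -> {in P, forall p, G p} ->
  (forall j, defect_bounded G x0 Rs K P (transl (col j B))) ->
  (forall p, G p -> \sum_(c <- C) rr (emul c p) <= Q) ->
  \sum_(c <- C) D2 c ^+ 2 <= korn_patch_const B K P * Q.
Proof.
move=> hB hBG hfit Sskew K0 GP hKP hQ.
have hS : \sum_(c <- C) frob (S c) <= korn_const B * (d%:R * K * ((size P)%:R * Q)).
  apply: le_trans (korn_translations hG hN hC hB hBG hu (fun c _ => Sskew c)) _.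
  apply: ler_wpM2l; first exact: korn_const_ge0.
  apply: le_trans (sum_transl_defect_le hfit hKP) _.
  apply: ler_wpM2l; first by rewrite mulr_ge0.
  by rewrite -sumr_const_seq big_seq [X in _ <= X]big_seq; apply: ler_sum => p /GP /hQ.
have hD2 : \sum_(c <- C) D2 c ^+ 2 <=
    \sum_(c <- C) (2 * (size Rs)%:R * rr c + 2 * patch_const * frob (S c)).
  rewrite big_seq [X in _ <= X]big_seq; apply: ler_sum => c cC.
  exact: (dist_transl_sq_le_fit hfit (reps_G hC cC)).
have hrrQ : \sum_(c <- C) rr c <= Q by have := hQ _ (G1 hG); under eq_bigr do rewrite emulg1.
apply: (le_trans hD2); rewrite big_split /= -!mulr_sumr /korn_patch_const.
have -> : forall x y z : R, (x + y * (z * (d%:R * K * (size P)%:R))) * Q =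
    x * Q + y * (z * (d%:R * K * ((size P)%:R * Q))) by move=> x y z; ring.
by apply: lerD; apply: ler_wpM2l; rewrite ?mulr_ge0 ?patch_const_ge0.
Qed.

End Representatives.
End KornBound.

Lemma sqrt_sums_equiv (R : realType) (m s1 s2 s3 c3 c4 : R) :
  0 <= m -> 0 <= s1 -> 0 <= c3 -> 0 <= c4 ->
  s1 <= s2 -> s2 <= c4 * s1 -> s2 <= s3 -> s3 <= c3 * s2 ->
  let c := (1 + c3) * (1 + c4) in
  let n1 := Num.sqrt (m * s1) in let n2 := Num.sqrt (m * s2) in
  let n3 := Num.sqrt (m * s3) in
  (n1 <= c * n2 /\ n2 <= c * n1) /\ (n1 <= c * n3 /\ n3 <= c * n1) /\
  (n2 <= c * n3 /\ n3 <= c * n2).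
Proof.
move=> m0 s10 c30 c40 h12 h21 h23 h32 c n1 n2 n3.
have s20 : 0 <= s2 := le_trans s10 h12.
have s30 : 0 <= s3 := le_trans s20 h23.
have c1 : 1 <= c by rewrite /c; nra.
have le_c sa sb k : 0 <= sb -> 0 <= k -> k <= c -> sa <= k * sb ->
    Num.sqrt (m * sa) <= c * Num.sqrt (m * sb).
  move=> sb0 k0 kc h; apply: sqrt_mul_le_scale => //.
  by apply: le_trans h _; apply: ler_wpM2r.
have c3c : c3 <= c by rewrite /c; nra.
have c4c : c4 <= c by rewrite /c; nra.
have c34 : 0 <= c3 * c4 := mulr_ge0 c30 c40.
have c34c : c3 * c4 <= c by rewrite /c; nra.
split; [split|split; split].
- by apply: (le_c _ _ 1); rewrite ?mul1r.
- exact: (le_c _ _ c4).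
- by apply: (le_c _ _ 1); rewrite ?mul1r ?(le_trans h12).
- apply: (le_c _ _ (c3 * c4)) => //; apply: le_trans h32 _.
  by rewrite -mulrA; apply: ler_wpM2l.
- by apply: (le_c _ _ 1); rewrite ?mul1r.
- exact: (le_c _ _ c3).
Qed.

Section KornPatch.
Variables (R : realType) (d : nat).
Local Notation Eu := (Eu R d).
Local Notation eid := (eid R d).
Variables (G : set Eu) (x0 : 'cV[R]_d) (Rs : seq Eu) (R' : set Eu) (R'' : seq Eu) (B : 'M[R]_d).
Hypotheses (hG : is_subgroup G) (RsG : forall h, h \in Rs -> G h) (hB : B \in unitmx)
  (hBG : forall i, G (transl (col i B))) (hgen : generates G R') (R'1 : R' eid)
  (hp1 : property1 G x0 R'') (hRs : forall g h, R' g -> h \in R'' -> emul g h \in Rs).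

Lemma sum_dist_transl_le_iso : exists2 c4 : R, 0 <= c4 &
  forall H C u, normal_sub H G -> is_reps G H C -> periodic G H u ->
    \sum_(g <- C) dist_transl x0 Rs u g ^+ 2 <= c4 * \sum_(g <- C) dist_iso x0 Rs u g ^+ 2.
Proof.
have Gws : {in [seq transl (col j B) | j <- enum 'I_d], forall w, G w}.
  by move=> w /mapP [j _ ->].
have [K [P [K0 GP hKP]]] := defect_bounded_seq hG hB hBG hgen R'1 hp1 hRs Gws.
have hKPj j : defect_bounded G x0 Rs K P (transl (col j B)).
  by apply: hKP; apply: map_f; rewrite mem_enum.
set c4 := korn_patch_const x0 Rs B K P.
have c40 : 0 <= c4 by apply: korn_patch_const_ge0.
exists c4 => // H C u hN hC hu.
set D1 := dist_iso x0 Rs u; have D10 := dist_iso_ge0 x0 Rs u.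
apply: (ler_addgt0_scale (k := c4 * \sum_(c <- C) (2 * D1 c + 1))).
  by rewrite mulr_ge0 ?sumr_ge0 // => c _; rewrite addr_ge0 ?mulr_ge0.
move=> del d0 d1; have [a [S [rr [hfit Sskew hrr]]]] := near_optimal_fit x0 hG RsG u d0.
have hQ p : G p -> \sum_(c <- C) rr (emul c p) <= \sum_(c <- C) (D1 c + del) ^+ 2.
  by move=> Gp; exact: (sum_fit_le_reindex hG RsG hN hC hu Gp hrr).
apply: le_trans (sum_dist_transl_le_fit hG RsG hN hC hu hB hBG hfit Sskew K0 GP hKPj hQ) _.
rewrite mulrCA -mulrDr; apply: ler_wpM2l => //.
have dd : del * del <= del * 1 by apply: ler_wpM2l => //; apply: ltW.
rewrite mulr_sumr -big_split /=; apply: ler_sum => c _; have := D10 c; lra.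
Qed.

End KornPatch.

Unset Implicit Arguments. Set Strict Implicit.

Theorem corollary4p7 (R : realType) (d : nat) (G : set (Eu R d))
  (x0 : 'cV[R]_d) (Rs : seq (Eu R d)) :
  space_group G ->
  (forall g h, G g -> G h -> eact g x0 = eact h x0 -> g = h) ->
  property2 G x0 Rs ->
  exists c : R, 0 < c /\
    forall (N : nat) (C : seq (Eu R d)),
      (0 < N)%N ->
      normal_sub (powset (transl_sub G) N) G ->
      is_reps G (powset (transl_sub G) N) C ->
      forall u : Eu R d -> 'cV[R]_d,
        periodic G (powset (transl_sub G) N) u ->
        let n1 := normU (Uiso x0 Rs) C Rs u in
        let n2 := normU (Uiso00 0 x0 Rs) C Rs u in
        let n3 := gradnorm C Rs u in
        (n1 <= c * n2 /\ n2 <= c * n1) /\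
        (n1 <= c * n3 /\ n3 <= c * n1) /\
        (n2 <= c * n3 /\ n3 <= c * n2).
Proof.
move=> [hG _ [B [hB hBG]]] _ [_ RsG [R' [R'' [R'1 hgen hp1 hRs]]]].
have eRs : eid R d \in Rs by have [_ _ eR'' _] := hp1; rewrite -[eid R d]emulg1; apply: hRs.
have [c4 c40 hc4] := sum_dist_transl_le_iso hG RsG hB hBG hgen R'1 hp1 hRs.
have c30 := grad_const_ge0 Rs.
exists ((1 + grad_const Rs) * (1 + c4)); split; first by rewrite mulr_gt0 ?ltr_wpDr.
move=> N C _ hN hC u hu; apply: sqrt_sums_equiv => //.
- by rewrite invr_ge0.
- by apply: sumr_ge0 => g _; apply: sqr_ge0.
- by apply: ler_sum => g _; apply: (dist_iso_sq_le_transl x0 hG RsG).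
- exact: (hc4 _ _ _ hN hC hu).
- by apply: ler_sum => g _; apply: (dist_transl_sq_le_grad x0 hG RsG).
- by rewrite mulr_sumr; apply: ler_sum => g _; apply: (grad_sq_le_dist_transl x0 hG RsG eRs).
Qed.
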